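(* $D_{\mathbb{C},2}\ge 1.1066$. More precisely, for $f_2(a,b,c)=\dfrac{(|a|^{4/3}+|b|^{4/3}+|c|^{4/3})^{3/4}}{(|a|+|b|)\sqrt{1+\frac{c^2}{4|ab|}}}$ one has $D_{\mathbb{C},2}\ge f_2\!\left(1,-1,\tfrac{352203}{125000}\right)\approx1.1066$.
   Context: $\ell_\infty^N(\mathbb{C})$ is $\mathbb{C}^N$ with the sup norm, and for a polynomial $P$ on it, $\|P\|=\sup\{|P(z)|:|z_i|\le1\ \forall i\}$. $D_{\mathbb{C},m}$ is the smallest constant $D$ such that for every $N$ and every $m$-homogeneous polynomial $P(z)=\sum_{|\alpha|=m}a_\alpha z^\alpha$ on $\ell_\infty^N(\mathbb{C})$, $\big(\sum_{|\alpha|=m}|a_\alpha|^{\frac{2m}{m+1}}\big)^{\frac{m+1}{2m}}\le D\|P\|$. *)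

From Stdlib Require Import Reals.
Open Scope R_scope.

Definition C : Type := (R * R)%type.
Definition C0 : C := (0, 0).
Definition Cadd (z w : C) : C := (fst z + fst w, snd z + snd w).
Definition Cmul (z w : C) : C :=
  (fst z * fst w - snd z * snd w, fst z * snd w + snd z * fst w).
Definition Cmod (z : C) : R := sqrt (fst z * fst z + snd z * snd z).

Fixpoint sumR (n : nat) (f : nat -> R) : R :=
  match n with O => 0 | S k => sumR k f + f k end.
Fixpoint sumC (n : nat) (f : nat -> C) : C :=
  match n with O => C0 | S k => Cadd (sumC k f) (f k) end.

(* real power of a nonnegative real, with the convention 0^p = 0 (p > 0) *)
Definition powr (x p : R) : R := if Rle_dec x 0 then 0 else Rpower x p.

(* A 2-homogeneous polynomial on C^N: P(z) = sum_{i <= j < N} a i j z_i z_j;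
   the multi-indices alpha with |alpha| = 2 are exactly the pairs i <= j. *)
Definition poly2_eval (N : nat) (a : nat -> nat -> C) (z : nat -> C) : C :=
  sumC N (fun j => sumC (S j) (fun i => Cmul (a i j) (Cmul (z i) (z j)))).

Definition in_polydisc (N : nat) (z : nat -> C) : Prop :=
  forall i, (i < N)%nat -> Cmod (z i) <= 1.

Definition is_sup_norm2 (N : nat) (a : nat -> nat -> C) (s : R) : Prop :=
  is_lub (fun r => exists z, in_polydisc N z /\ r = Cmod (poly2_eval N a z)) s.

(* (sum_{|alpha|=2} |a_alpha|^{4/3})^{3/4}   (2m/(m+1) = 4/3 for m = 2) *)
Definition coef_norm2 (N : nat) (a : nat -> nat -> C) : R :=
  powr (sumR N (fun j => sumR (S j) (fun i => powr (Cmod (a i j)) (4/3)))) (3/4).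

Definition admissible_D2 (D : R) : Prop :=
  forall (N : nat) (a : nat -> nat -> C) (s : R),
    is_sup_norm2 N a s -> coef_norm2 N a <= D * s.

Definition f2 (a b c : R) : R :=
  powr (powr (Rabs a) (4/3) + powr (Rabs b) (4/3) + powr (Rabs c) (4/3)) (3/4)
  / ((Rabs a + Rabs b) * sqrt (1 + c ^ 2 / (4 * Rabs (a * b)))).

From Pilot Require Import Defs.
From Stdlib Require Import Reals Lra Lia Psatz.
Open Scope R_scope.

(* The test polynomial is P_c(z0,z1) = z0^2 - z1^2 + c z0 z1 on ell_infty^2(C).
   - Its coefficient norm is (2 + |c|^{4/3})^{3/4}.
   - Its sup norm is at most sqrt(c^2 + 4): writing p = |z0|^2, q = |z1|^2 and
     a = Re(z0 conj z1), one has |P_c(z)|^2 = (p+q)^2 + c^2 pq - 4a^2 + 2c(p-q)a,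
     and c^2 + 4 minus this quantity is the sum of squares
     (4 - (p+q)^2)(1 + c^2/4) + (2a - c(p-q)/2)^2, nonnegative on the bidisc.
   - For any polynomial bounded by S on the polydisc, the sup norm exists (by
     completeness) and is at most S, so an admissible D satisfies
     coef_norm / S <= D.
   Since sqrt(c^2 + 4) = 2 sqrt(1 + c^2/4), the quotient is exactly f2(1,-1,c).
   The numerical value 1.1066 is checked by raising the rational-exponent
   quantities to integer powers, where everything becomes polynomial. *)

Lemma powr_of_pos (x p : R) : 0 < x -> powr x p = Rpower x p.
Proof. intros Hx; unfold powr; destruct (Rle_dec x 0); lra. Qed.

Lemma powr_nonneg (x p : R) : 0 <= powr x p.
Proof.
  unfold powr; destruct (Rle_dec x 0); [lra|].
  left; apply exp_pos.
Qed.

Lemma powr_one (p : R) : powr 1 p = 1.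
Proof.
  rewrite powr_of_pos by lra; unfold Rpower.
  rewrite ln_1, Rmult_0_r; apply exp_0.
Qed.

Lemma Rpower_pow_nat (x p : R) (n m : nat) :
  0 < x -> p * INR n = INR m -> Rpower x p ^ n = x ^ m.
Proof.
  intros Hx Hpm.
  rewrite <- Rpower_pow by (unfold Rpower; apply exp_pos).
  rewrite Rpower_mult, Hpm; apply Rpower_pow; exact Hx.
Qed.

Lemma pow_lt_compat (x y : R) (n : nat) :
  0 <= x < y -> (0 < n)%nat -> x ^ n < y ^ n.
Proof.
  intros Hxy Hn; induction n as [|n IH]; [lia|].
  destruct n as [|n]; [simpl; lra|].
  assert (IH' : x ^ S n < y ^ S n) by (apply IH; lia).
  assert (0 <= x ^ S n) by (apply pow_le; lra).
  change (x * x ^ S n < y * y ^ S n); nra.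
Qed.

Lemma pow_le_reg (x y : R) (n : nat) :
  0 <= y -> (0 < n)%nat -> x ^ n <= y ^ n -> x <= y.
Proof.
  intros Hy Hn Hpow; destruct (Rle_lt_dec x y) as [|Hyx]; [assumption|].
  pose proof (pow_lt_compat y x n (conj Hy Hyx) Hn); lra.
Qed.

Lemma Cmod_nonneg (z : Defs.C) : 0 <= Cmod z.
Proof. apply sqrt_pos. Qed.

Lemma Rabs_minus_one : Rabs (-1) = 1.
Proof. rewrite Rabs_left; lra. Qed.

Lemma Cmod_real (x : R) : Cmod (x, 0) = Rabs x.
Proof.
  unfold Cmod; simpl; rewrite Rmult_0_l, Rplus_0_r.
  apply sqrt_Rsqr_abs.
Qed.

Lemma Cmod_le_1_sq (z : Defs.C) :
  Cmod z <= 1 -> fst z * fst z + snd z * snd z <= 1.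
Proof.
  intros Hz; apply sqrt_le_0; [nra | lra |].
  rewrite sqrt_1; exact Hz.
Qed.

Lemma admissible_lower_bound (N : nat) (a : nat -> nat -> Defs.C) (S D : R) :
  admissible_D2 D -> 0 < coef_norm2 N a -> 0 < S ->
  (forall z, in_polydisc N z -> Cmod (poly2_eval N a z) <= S) ->
  coef_norm2 N a / S <= D.
Proof.
  intros HD Hcoef HS Hbound.
  set (values := fun r => exists z, in_polydisc N z /\ r = Cmod (poly2_eval N a z)).
  set (z0 := fun _ : nat => C0).
  assert (Hz0 : in_polydisc N z0).
  { intros i _; unfold z0, C0; rewrite Cmod_real, Rabs_R0; lra. }
  assert (Hval0 : values (Cmod (poly2_eval N a z0))) by (exists z0; split; auto).
  assert (HSup : is_upper_bound values S).
  { intros r [z [Hz ->]]; apply Hbound; exact Hz. }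
  destruct (completeness values) as [s Hs].
  { exists S; exact HSup. }
  { eexists; exact Hval0. }
  assert (Hs0 : 0 <= s).
  { eapply Rle_trans; [apply Cmod_nonneg | apply (proj1 Hs); exact Hval0]. }
  assert (HsS : s <= S) by (apply (proj2 Hs); exact HSup).
  assert (Hcs : coef_norm2 N a <= D * s) by (apply (HD N a s); exact Hs).
  assert (HDpos : 0 < D) by nra.
  apply (Rmult_le_reg_r S); [exact HS|].
  unfold Rdiv; rewrite Rmult_assoc, Rinv_l, Rmult_1_r by lra.
  nra.
Qed.

Lemma bidisc_quadratic_bound (c p q a : R) :
  0 <= p <= 1 -> 0 <= q <= 1 ->
  (p + q) ^ 2 + c * c * p * q - 4 * a * a + 2 * c * (p - q) * a <= c * c + 4.
Proof.
  intros Hp Hq.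
  assert (Hdefect : c * c + 4 - ((p + q) ^ 2 + c * c * p * q - 4 * a * a + 2 * c * (p - q) * a)
     = (4 - (p + q) ^ 2) * (1 + c * c / 4) + (2 * a - c * (p - q) / 2) ^ 2) by field.
  assert (0 <= (4 - (p + q) ^ 2) * (1 + c * c / 4)).
  { apply Rmult_le_pos; [simpl; nra | nra]. }
  assert (0 <= (2 * a - c * (p - q) / 2) ^ 2) by apply pow2_ge_0.
  lra.
Qed.

Definition test_coef (c : R) (i j : nat) : Defs.C :=
  match i, j with
  | O, O => (1, 0)
  | S O, S O => (-1, 0)
  | O, S O => (c, 0)
  | _, _ => C0
  end.

Lemma test_poly_bound (c : R) (z : nat -> Defs.C) :
  in_polydisc 2 z -> Cmod (poly2_eval 2 (test_coef c) z) <= sqrt (c * c + 4).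
Proof.
  intros Hz.
  destruct (z 0%nat) as [x0 y0] eqn:Ez0, (z 1%nat) as [x1 y1] eqn:Ez1.
  pose proof (Cmod_le_1_sq _ (Hz 0%nat ltac:(lia))) as H0.
  pose proof (Cmod_le_1_sq _ (Hz 1%nat ltac:(lia))) as H1.
  rewrite Ez0 in H0; rewrite Ez1 in H1; simpl in H0, H1.
  unfold poly2_eval, Cmod; simpl; rewrite Ez0, Ez1; unfold Cadd, Cmul, C0; simpl.
  apply sqrt_le_1_alt.
  pose proof (bidisc_quadratic_bound c (x0 * x0 + y0 * y0) (x1 * x1 + y1 * y1)
    (x0 * x1 + y0 * y1) ltac:(nra) ltac:(nra)) as Hq.
  eapply Rle_trans; [| exact Hq]. right; ring.
Qed.

Lemma test_coef_norm (c : R) :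
  coef_norm2 2 (test_coef c) = powr (2 + powr (Rabs c) (4/3)) (3/4).
Proof.
  unfold coef_norm2, test_coef, C0; simpl.
  rewrite !Cmod_real, Rabs_minus_one, Rabs_R1, powr_one.
  f_equal; ring.
Qed.

Lemma sqrt_c2_plus_4 (c : R) : sqrt (c * c + 4) = 2 * sqrt (1 + c ^ 2 / 4).
Proof.
  replace (c * c + 4) with ((2 * 2) * (1 + c ^ 2 / 4)) by field.
  rewrite sqrt_mult by nra.
  rewrite sqrt_square by lra; reflexivity.
Qed.

Lemma f2_test (c : R) :
  f2 1 (-1) c = powr (2 + powr (Rabs c) (4/3)) (3/4) / sqrt (c * c + 4).
Proof.
  unfold f2.
  rewrite Rabs_minus_one, Rabs_R1, powr_one, Rmult_1_l, Rabs_minus_one.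
  rewrite sqrt_c2_plus_4.
  replace (1 + 1) with 2 by ring; replace (4 * 1) with 4 by ring.
  reflexivity.
Qed.

Lemma f2_lower_bound (c D : R) : admissible_D2 D -> f2 1 (-1) c <= D.
Proof.
  intros HD.
  rewrite f2_test, <- test_coef_norm.
  apply admissible_lower_bound; [exact HD | | |].
  - rewrite test_coef_norm, powr_of_pos.
    + apply exp_pos.
    + pose proof (powr_nonneg (Rabs c) (4/3)); lra.
  - apply sqrt_lt_R0; nra.
  - apply test_poly_bound.
Qed.

Lemma f2_numeric : 11066 / 10000 <= f2 1 (-1) (352203 / 125000).
Proof.
  set (c := 352203 / 125000).
  assert (Hc : 0 < c) by (unfold c; lra).
  rewrite f2_test, Rabs_pos_eq by lra.
  rewrite (powr_of_pos c) by lra.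
  set (X := Rpower c (4/3)).
  assert (HX : 0 < X) by apply exp_pos.
  rewrite powr_of_pos by lra.
  set (Y := Rpower (2 + X) (3/4)).
  set (S := sqrt (c * c + 4)).
  assert (HY : 0 < Y) by apply exp_pos.
  assert (HS : 0 < S) by (apply sqrt_lt_R0; nra).
  assert (HS2 : S ^ 2 = c * c + 4) by (apply pow2_sqrt; nra).
  assert (HX3 : X ^ 3 = c ^ 4) by (apply Rpower_pow_nat; [lra | simpl; field]).
  assert (HY4 : Y ^ 4 = (2 + X) ^ 3) by (apply Rpower_pow_nat; [lra | simpl; field]).
  assert (HXlow : 39796 / 10000 <= X).
  { apply (pow_le_reg _ _ 3); [lra | lia |]. rewrite HX3; unfold c; simpl; lra. }
  assert (HYlow : 11066 / 10000 * S <= Y).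
  { apply (pow_le_reg _ _ 4); [lra | lia |].
    rewrite HY4, Rpow_mult_distr.
    replace (S ^ 4) with ((S ^ 2) ^ 2) by ring; rewrite HS2.
    assert ((2 + 39796 / 10000) ^ 3 <= (2 + X) ^ 3) by (apply pow_incr; lra).
    unfold c in *; simpl in *; lra. }
  apply (Rmult_le_reg_r S); [exact HS|].
  unfold Rdiv at 2; rewrite Rmult_assoc, Rinv_l, Rmult_1_r by lra.
  exact HYlow.
Qed.

Theorem mainTheorem12 :
  forall D : R, admissible_D2 D ->
    f2 1 (-1) (352203 / 125000) <= D /\ 11066 / 10000 <= D.
Proof.
  intros D HD.
  pose proof (f2_lower_bound (352203 / 125000) D HD) as Hbound.
  split; [exact Hbound |].
  eapply Rle_trans; [exact f2_numeric | exact Hbound].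
Qed.
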